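(* For a triangle-free graph $G$ without isolated vertices, the following are equivalent: (1) $G$ is localizable; (2) $G$ is very well-covered; (3) $G$ has a perfect matching every edge of which is a strong clique; (4) $G$ has a perfect matching, and every edge of every perfect matching of $G$ is a strong clique.
   Context: A clique is strong if it intersects every maximal independent set. A graph is localizable if its vertex set admits a partition into strong cliques. A graph is well-covered if all its maximal independent sets have the same size, and very well-covered if it is well-covered, has no isolated vertices, and its independence number equals $|V(G)|/2$. *)

From mathcomp Require Import all_boot.
Set Implicit Arguments. Unset Strict Implicit. Unset Printing Implicit Defensive.

Section Graphs.
Variables (T : finType) (e : rel T).

Definition simple_graph : Prop := symmetric e /\ irreflexive e.

Definition independent (S : {set T}) : bool :=
  [forall x in S, forall y in S, ~~ e x y].

Definition max_independent (S : {set T}) : bool := maxset independent S.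

Definition clique (C : {set T}) : bool :=
  [forall x in C, forall y in C, (x != y) ==> e x y].

Definition strong_clique (C : {set T}) : Prop :=
  clique C /\ forall I : {set T}, max_independent I -> C :&: I != set0.

Definition localizable : Prop :=
  exists P : {set {set T}}, partition P [set: T] /\
    forall C, C \in P -> strong_clique C.

Definition alpha : nat := \max_(S : {set T} | independent S) #|S|.

Definition well_covered : Prop :=
  forall I J : {set T}, max_independent I -> max_independent J -> #|I| = #|J|.

Definition no_isolated : Prop := forall x : T, exists y, e x y.

Definition very_well_covered : Prop :=
  well_covered /\ no_isolated /\ alpha.*2 = #|T|.

Definition triangle_free : Prop :=
  forall x y z : T, ~ [&& e x y, e y z & e x z].

Definition is_edge (E : {set T}) : Prop :=
  exists x y, e x y /\ E = [set x; y].

Definition perfect_matching (M : {set {set T}}) : Prop :=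
  partition M [set: T] /\ forall E, E \in M -> is_edge E.

End Graphs.

(* An edge meets an independent set at most once, so along a perfect matching M
   every independent set has at most #|M| = n/2 vertices, with equality exactly
   when it meets every edge of M.  Hence a perfect matching of strong edges makes
   G very well-covered, and in a very well-covered graph every edge of every
   perfect matching is strong.  In a triangle-free graph without isolated
   vertices the strong cliques are exactly the strong edges, so localizability
   means having a perfect matching of strong edges.  Finally, a very
   well-covered graph has a perfect matching by Hall's theorem: in a
   well-covered graph without isolated vertices #|N(S)| >= #|S| for every
   independent S, so a maximal independent set, of size n/2, is matched into
   its complement. *)

From mathcomp Require Import all_boot zify.
Set Implicit Arguments. Unset Strict Implicit. Unset Printing Implicit Defensive.

Section Hall.
Variable T : finType.
Implicit Types (A : T -> {set T}) (D J K : {set T}) (f g h : T -> T).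

Definition hall_condition A D :=
  forall J, J \subset D -> #|J| <= #|\bigcup_(i in J) A i|.

Definition distinct_representatives A D f :=
  {in D &, injective f} /\ {in D, forall i, f i \in A i}.

Lemma bigcup_setD A K X :
  \bigcup_(i in K) (A i :\: X) = (\bigcup_(i in K) A i) :\: X.
Proof.
apply/setP=> y; rewrite inE; apply/bigcupP/andP => [[i iK] | [yX /bigcupP[i iK yA]]].
  by rewrite inE => /andP[yX yA]; split=> //; apply/bigcupP; exists i.
by exists i; rewrite // inE yX.
Qed.

Lemma hall_conditionS A D J : J \subset D -> hall_condition A D -> hall_condition A J.
Proof. by move=> JD hD K KJ; apply: hD; apply: subset_trans JD. Qed.

Lemma hall_condition_tight A D J :
  hall_condition A D -> J \subset D -> #|\bigcup_(i in J) A i| <= #|J| ->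
  hall_condition (fun i => A i :\: \bigcup_(i in J) A i) (D :\: J).
Proof.
move=> hD JD tightJ K; rewrite subsetD => /andP[KD KJ].
set NJ := \bigcup_(i in J) A i in tightJ *.
have NKJ : #|K :|: J| <= #|\bigcup_(i in K) A i :|: NJ|.
  by rewrite -bigcup_setU; apply: hD; rewrite subUset KD.
rewrite bigcup_setD cardsD; have := subset_leq_card (subsetIr (\bigcup_(i in K) A i) NJ).
by move: NKJ; rewrite !cardsU (disjoint_setI0 KJ) cards0; lia.
Qed.

Lemma hall_condition_surplus A D i0 v :
  (forall J, J \subset D -> J != set0 -> J != D -> #|J| < #|\bigcup_(i in J) A i|) ->
  i0 \in D -> hall_condition (fun i => A i :\ v) (D :\ i0).
Proof.
move=> hD i0D K; rewrite subsetD1 => /andP[KD i0K].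
have [-> | K0] := eqVneq K set0; first by rewrite cards0.
have KnD : K != D by apply: contraNneq i0K => ->.
rewrite bigcup_setD; have := hD K KD K0 KnD.
by have := cardsD1 v (\bigcup_(i in K) A i); lia.
Qed.

Lemma distinct_representatives_glue A D1 D2 g h :
  distinct_representatives A D1 g ->
  distinct_representatives (fun i => A i :\: g @: D1) D2 h ->
  distinct_representatives A (D1 :|: D2) (fun i => if i \in D1 then g i else h i).
Proof.
move=> [ginj gA] [hinj hA]; split=> [x y | i]; last first.
  by rewrite inE; case: ifP => [iD1 _ | _ /= /hA /setDP[]]; [exact: gA |].
have hout a b : a \in D1 -> b \in D2 -> g a != h b.
  by move=> aD1 /hA /setDP[_]; apply: contra => /eqP<-; apply: imset_f.
rewrite !inE; case: ifP => xD1; case: ifP => yD1 /= xD yD; first exact: ginj.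
- by move=> gh; have /eqP[] := hout x y xD1 yD.
- by move=> hg; have /eqP[] := hout y x yD1 xD; rewrite hg.
- exact: hinj.
Qed.

(* Halmos-Vaughan induction: either some nonempty proper J \subset D is tight,
   and J and D :\: J are matched separately, or every such J has a surplus
   neighbour, and any choice of a representative for one i0 extends. *)
Theorem hall_marriage A D :
  hall_condition A D -> exists f, distinct_representatives A D f.
Proof.
have [n] := ubnP #|D|; elim: n A D => // n IH A D /ltnSE-leDn hD.
have [-> | [i0 i0D]] := set_0Vmem D; first by exists id; split=> i; rewrite inE.
case: (boolP [exists J : {set T}, [&& J \subset D, J != set0, J != D &
                #|\bigcup_(i in J) A i| <= #|J|]]).
- case/existsP=> J /and4P[JD J0 JnD tightJ].
  have JpD : J \proper D by rewrite properEneq JnD.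
  have [g g_rep] := IH A J (leq_trans (proper_card JpD) leDn) (hall_conditionS JD hD).
  have ltDJ : #|D :\: J| < n.
    by have := subset_leq_card JD; rewrite cardsDS // -card_gt0 in J0 *; lia.
  have [h h_rep] := IH _ _ ltDJ (hall_condition_tight hD JD tightJ).
  have gJ : g @: J \subset \bigcup_(i in J) A i.
    apply/subsetP=> _ /imsetP[j jJ ->]; apply/bigcupP.
    by exists j; case: g_rep => _ /(_ j jJ).
  exists (fun i => if i \in J then g i else h i).
  have <- : J :|: (D :\: J) = D by rewrite setDE setUIr setUCr setIT (setUidPr JD).
  apply: distinct_representatives_glue g_rep _; case: h_rep => hinj hA; split=> // i /hA.
  by apply: subsetP; apply: setDS.
- rewrite negb_exists => /forallP hJ.
  have [v vA] : exists v, v \in A i0.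
    by apply/card_gt0P; have := hD [set i0]; rewrite sub1set i0D big_set1 cards1; exact.
  have hD' : hall_condition (fun i => A i :\ v) (D :\ i0).
    apply: hall_condition_surplus i0D => J JD J0 JnD.
    by have := hJ J; rewrite JD J0 JnD ltnNge.
  have ltDi0 : #|D :\ i0| < n by move: leDn; rewrite (cardsD1 i0 D) i0D.
  have [h h_rep] := IH _ _ ltDi0 hD'.
  exists (fun i => if i \in [set i0] then v else h i); rewrite -(setD1K i0D).
  apply: distinct_representatives_glue.
    by split=> [x y | i]; rewrite ?inE => /eqP-> // /eqP->.
  by rewrite imset_set1.
Qed.

End Hall.

Section Graph.
Variables (T : finType) (e : rel T).
Hypotheses (e_sym : symmetric e) (e_irr : irreflexive e).
Implicit Types (S I J C E : {set T}) (M : {set {set T}}).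

Definition nbhd S := \bigcup_(s in S) [set y | e s y].

Lemma independentP S :
  reflect (forall x y, x \in S -> y \in S -> ~~ e x y) (independent e S).
Proof.
apply: (iffP forallP) => [H x y xS yS | H x].
  by have /implyP/(_ xS)/forallP/(_ y)/implyP/(_ yS) := H x.
by apply/implyP=> xS; apply/forallP=> y; apply/implyP=> yS; apply: H.
Qed.

Lemma cliqueP C :
  reflect (forall x y, x \in C -> y \in C -> x != y -> e x y) (clique e C).
Proof.
apply: (iffP forallP) => [H x y xC yC | H x].
  by have /implyP/(_ xC)/forallP/(_ y)/implyP/(_ yC)/implyP := H x.
by apply/implyP=> xC; apply/forallP=> y; apply/implyP=> yC; apply/implyP; apply: H.
Qed.

Lemma independentS S J : S \subset J -> independent e J -> independent e S.
Proof.
move=> SJ /independentP iJ; apply/independentP=> x y /(subsetP SJ) xJ.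
by move/(subsetP SJ); apply: iJ.
Qed.

Lemma independent0 : independent e set0.
Proof. by apply/independentP=> x y; rewrite inE. Qed.

Lemma independent_set1 x : independent e [set x].
Proof. by apply/independentP=> y z /set1P-> /set1P->; rewrite e_irr. Qed.

Lemma max_independentW I : max_independent e I -> independent e I.
Proof. by case/maxsetP. Qed.

Lemma max_independent_nbr I x y : max_independent e I -> x \in I -> e x y -> y \notin I.
Proof.
by move=> /max_independentW/independentP iI xI exy; apply: contraL exy; apply: iI.
Qed.

Lemma alpha_well_covered I : well_covered e -> max_independent e I -> alpha e = #|I|.
Proof.
move=> wc mI; apply/eqP; rewrite eqn_leq; apply/andP; split.
  apply/bigmax_leqP=> S iS; have [J mJ SJ] := maxset_exists iS.
  by rewrite (wc I J mI mJ) subset_leq_card.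
exact: (leq_bigmax_cond _ (max_independentW mI)).
Qed.

(* Trading J :&: nbhd S for S :\: J keeps J independent, and well-coveredness
   forbids the result from being larger than J. *)
Lemma well_covered_exchange S J :
  well_covered e -> max_independent e J -> independent e S ->
  #|S :\: J| <= #|J :&: nbhd S|.
Proof.
move=> wc mJ /independentP iS.
have /independentP iJ := max_independentW mJ.
have inN s z : s \in S -> e s z -> z \in nbhd S.
  by move=> sS esz; apply/bigcupP; exists s; rewrite ?inE.
set J' := (J :\: nbhd S) :|: (S :\: J).
have iJ' : independent e J'.
  apply/independentP=> x y; rewrite !inE.
  case/orP=> [/andP[xN xJ] | /andP[xJ xS]]; case/orP=> [/andP[yN yJ] | /andP[yJ yS]].
  - exact: iJ.
  - by apply: contra xN; rewrite e_sym; apply: inN.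
  - by apply: contra yN; apply: inN.
  - exact: iS.
have [J'' mJ'' J'J''] := maxset_exists iJ'.
have := subset_leq_card J'J''; rewrite -(wc J J'' mJ mJ'').
have disj : (J :\: nbhd S) :&: (S :\: J) = set0.
  by apply/setP=> z; rewrite !inE; case: (z \in J); rewrite ?andbF.
rewrite /J' cardsU disj cards0 subn0.
have := cardsID (nbhd S) J; lia.
Qed.

(* A maximal independent J through a neighbour of some s \in S splits S: the
   neighbours of S :&: J avoid J, and S :\: J is charged to J :&: nbhd S. *)
Lemma well_covered_nbhd S :
  well_covered e -> no_isolated e -> independent e S -> #|S| <= #|nbhd S|.
Proof.
move=> wc ni.
have [n] := ubnP #|S|; elim: n S => // n IH S /ltnSE-leSn iS.
have [-> | [s sS]] := set_0Vmem S; first by rewrite cards0.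
have [t est] := ni s.
have [J mJ tJ] := maxset_exists (independent_set1 t).
have tJ' : t \in J by rewrite (subsetP tJ) ?set11.
have sJ : s \notin J by apply: contraL tJ' => sJ; apply: max_independent_nbr mJ sJ est.
have ltSJ : #|S :&: J| < n.
  apply: leq_trans leSn; apply: proper_card; rewrite properE subsetIl.
  by apply/subsetPn; exists s; rewrite // inE (negbTE sJ) andbF.
have IHSJ := IH _ ltSJ (independentS (subsetIl _ _) iS).
have disj : (J :&: nbhd S) :&: nbhd (S :&: J) = set0.
  apply/setP=> z; rewrite !inE; apply/negbTE/negP=> /andP[/andP[zJ _] /bigcupP[x]].
  by rewrite !inE => /andP[_ xJ] exz; have /negP := max_independent_nbr mJ xJ exz.
have sub : (J :&: nbhd S) :|: nbhd (S :&: J) \subset nbhd S.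
  rewrite subUset subsetIr; apply/subsetP=> z /bigcupP[x /setIP[xS _] exz].
  by apply/bigcupP; exists x.
have := subset_leq_card sub; rewrite cardsU disj cards0 subn0.
have := well_covered_exchange wc mJ iS; have := cardsID J S; lia.
Qed.

Lemma is_edge_neq E : is_edge e E -> exists x y, [/\ e x y, x != y & E = [set x; y]].
Proof.
case=> x [y [exy ->]]; exists x, y; split=> //.
by apply: contraTneq exy => ->; rewrite e_irr.
Qed.

Lemma is_edge_clique E : is_edge e E -> clique e E.
Proof.
case=> x [y [exy ->]]; apply/cliqueP=> a b.
by rewrite !inE => /orP[]/eqP-> /orP[]/eqP->; rewrite ?eqxx // e_sym.
Qed.

Lemma card_clique_independent C I :
  clique e C -> independent e I -> #|C :&: I| <= 1.
Proof.
move=> /cliqueP cC /independentP iI; apply/card_le1_eqP=> x y /setIP[xC xI] /setIP[yC yI].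
by apply/eqP; apply: contraNT (iI y x yI xI); apply: cC.
Qed.

Lemma card_edge_independent E I :
  is_edge e E -> independent e I -> #|E :&: I| <= 1 ?= iff (E :&: I != set0).
Proof.
move=> /is_edge_clique cE iI; have le1 := card_clique_independent cE iI.
by split=> //; rewrite -card_gt0 eqn_leq le1.
Qed.

Lemma card_perfect_matching M : perfect_matching e M -> #|T| = (#|M|).*2.
Proof.
move=> [pM eM]; rewrite -cardsT (card_partition pM) -muln2 -sum_nat_const.
by apply: eq_bigr => E /eM/is_edge_neq[x [y [_ xy ->]]]; rewrite cards2 xy.
Qed.

Lemma card_independent_perfect_matching M I :
  perfect_matching e M -> independent e I ->
  #|I| <= #|M| ?= iff [forall (E | E \in M), E :&: I != set0].
Proof.
move=> [pM eM] iI.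
have -> : #|I| = \sum_(E in M) #|E :&: I|.
  transitivity (\sum_(x in [set: T] | x \in I) 1).
    by rewrite -sum1_card; apply: eq_bigl => x; rewrite in_setT.
  rewrite (set_partition_big_cond _ pM); apply: eq_bigr => E _.
  by rewrite sum1dep_card; apply: eq_card => x; rewrite !inE.
rewrite -sum1_card; apply: leqif_sum => E /eM EE; exact: card_edge_independent.
Qed.

(* A maximal independent set through a neighbour of x \in C avoids x but meets
   C, which yields a second vertex y; a third vertex would close a triangle. *)
Lemma strong_clique_edge C :
  triangle_free e -> no_isolated e -> strong_clique e C -> is_edge e C.
Proof.
move=> tf ni [/cliqueP cC sC].
have [I0 mI0 _] := maxset_exists independent0.
have /set0Pn[x /setIP[xC _]] := sC I0 mI0.
have [t ext] := ni x.
have [J mJ /subsetP tJ] := maxset_exists (independent_set1 t).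
have /set0Pn[y /setIP[yC yJ]] := sC J mJ.
have yx : y != x.
  apply: contraTneq yJ => ->.
  by apply: max_independent_nbr mJ (tJ t (set11 t)) _; rewrite e_sym.
exists x, y; split; first by apply: cC; rewrite // eq_sym.
apply/setP=> z; rewrite !inE; apply/idP/idP => [zC | /orP[] /eqP-> //].
apply/negPn/negP; rewrite negb_or => /andP[zx zy].
by apply: (tf x y z); rewrite !cC // eq_sym.
Qed.

Lemma perfect_matching_imset (X : {set T}) (f : T -> T) :
  {in X &, injective f} -> {in X, forall x, e x (f x)} -> f @: X = ~: X ->
  perfect_matching e [set [set x; f x] | x in X].
Proof.
move=> finj efX fX.
have fXout x : x \in X -> f x \notin X.
  by move=> xX; have := imset_f f xX; rewrite fX inE.
split=> [|_ /imsetP[x xX ->]]; last by exists x, (f x); rewrite efX.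
apply/and3P; split.
- rewrite cover_imset; apply/eqP/setP=> v; rewrite inE; apply/bigcupP.
  have [vX | vX] := boolP (v \in X); first by exists v; rewrite ?inE ?eqxx.
  have /imsetP[x xX ->] : v \in f @: X by rewrite fX inE.
  by exists x; rewrite ?inE ?eqxx ?orbT.
- apply/trivIsetP=> _ _ /imsetP[x xX ->] /imsetP[y yX ->] neq.
  have xy : x != y by apply: contraNneq neq => ->.
  rewrite disjoint_subset; apply/subsetP=> z; rewrite !inE.
  case/orP=> /eqP->; rewrite negb_or; apply/andP; split.
  + exact: xy.
  + by apply: contraTneq xX => ->; apply: fXout.
  + by apply: contraTneq yX => <-; apply: fXout.
  + by apply: contra xy => /eqP/finj->.
- by apply/imsetP=> -[x _ /setP/(_ x)]; rewrite !inE eqxx.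
Qed.

Lemma very_well_covered_perfect_matching :
  very_well_covered e -> exists M, perfect_matching e M.
Proof.
move=> [wc [ni alpha2]].
have [I mI _] := maxset_exists independent0; have iI := max_independentW mI.
have [f [finj fA]] := @hall_marriage T (fun x => [set y | e x y]) I
  (fun J JI => well_covered_nbhd wc ni (independentS JI iI)).
have efI x : x \in I -> e x (f x) by move=> /fA; rewrite inE.
exists [set [set x; f x] | x in I]; apply: perfect_matching_imset => //.
apply/eqP; rewrite eqEcard card_in_imset //.
have -> : #|~: I| = #|I|.
  by move: (cardsC I) alpha2; rewrite (alpha_well_covered wc mI) -addnn; lia.
rewrite leqnn andbT; apply/subsetP=> _ /imsetP[x xI ->].
by rewrite inE (max_independent_nbr mI xI (efI x xI)).
Qed.

Lemma meets_perfect_matching M I :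
  perfect_matching e M -> independent e I -> #|I| = #|M| ->
  forall E, E \in M -> E :&: I != set0.
Proof.
move=> pmM iI eqIM; have [_] := card_independent_perfect_matching pmM iI.
by rewrite eqIM eqxx => /esym/forall_inP.
Qed.

Lemma very_well_covered_strong_clique M :
  very_well_covered e -> perfect_matching e M ->
  forall E, E \in M -> strong_clique e E.
Proof.
move=> [wc [_ alpha2]] pmM E EM; split; first exact/is_edge_clique/pmM.2.
move=> I mI; have eqIM : #|I| = #|M|.
  apply: double_inj.
  by rewrite -(alpha_well_covered wc mI) alpha2 (card_perfect_matching pmM).
exact: meets_perfect_matching pmM (max_independentW mI) eqIM E EM.
Qed.

Lemma strong_perfect_matching_very_well_covered M :
  no_isolated e -> perfect_matching e M -> (forall E, E \in M -> strong_clique e E) ->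
  very_well_covered e.
Proof.
move=> ni pmM sM.
have cardI I : max_independent e I -> #|I| = #|M|.
  move=> mI; apply/eqP.
  have [_ ->] := card_independent_perfect_matching pmM (max_independentW mI).
  by apply/forall_inP=> E /sM[_]; apply.
have wc : well_covered e by move=> I J mI mJ; rewrite !cardI.
have [I mI _] := maxset_exists independent0.
by split; rewrite // (alpha_well_covered wc mI) cardI // (card_perfect_matching pmM).
Qed.

End Graph.

Theorem mainTheorem8 (T : finType) (e : rel T) :
  simple_graph e -> triangle_free e -> no_isolated e ->
  [/\ (localizable e <-> very_well_covered e),
      (very_well_covered e <->
         exists M, perfect_matching e M /\ forall E, E \in M -> strong_clique e E)
    & ((exists M, perfect_matching e M /\ forall E, E \in M -> strong_clique e E) <->
         ((exists M, perfect_matching e M) /\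
          forall M, perfect_matching e M -> forall E, E \in M -> strong_clique e E))].
Proof.
move=> [e_sym e_irr] tf ni.
set strong_pm := exists M, _.
have loc_spm : localizable e <-> strong_pm.
  split=> [[P [pP sP]] | [M [[pM _] sM]]]; last by exists M.
  by exists P; split=> //; split=> // C /sP/(strong_clique_edge e_sym e_irr tf ni).
have spm_vwc : strong_pm -> very_well_covered e.
  by case=> M [pmM sM]; apply: strong_perfect_matching_very_well_covered pmM sM.
have vwc_all : very_well_covered e -> (exists M, perfect_matching e M) /\
    forall M, perfect_matching e M -> forall E, E \in M -> strong_clique e E.
  move=> vwc; split; first exact: very_well_covered_perfect_matching.
  by move=> M; apply: very_well_covered_strong_clique.
have all_spm : (exists M, perfect_matching e M) /\
    (forall M, perfect_matching e M -> forall E, E \in M -> strong_clique e E) ->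
    strong_pm.
  by case=> -[M pmM] sM; exists M; split; last exact: sM.
split; first rewrite loc_spm; split; tauto.
Qed.
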